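(* For no positive integer $m>1$ and no ordering of its elements is a quadratical quasigroup of order $m$ $(m-1)$-translatable.
   Context: A quadratical quasigroup is a quasigroup $(Q,\cdot)$ satisfying $xy\cdot x=zx\cdot yz$ for all $x,y,z$; equivalently, a groupoid satisfying $x\cdot x=x$, $yx\cdot xy=x$ and $xy\cdot zw=xz\cdot yw$. A finite groupoid with ordering $q_1,\dots,q_n$ of its elements is $k$-translatable ($1\le k<n$) with respect to this ordering if $q_i\cdot q_j=q_{i-1}\cdot q_{j-k}$ for all $i\in\{2,\dots,n\}$, $j\in\{1,\dots,n\}$, indices taken modulo $n$ in $\{1,\dots,n\}$. *)

From mathcomp Require Import all_boot.
Set Implicit Arguments. Unset Strict Implicit. Unset Printing Implicit Defensive.

Definition quasigroup (T : Type) (op : T -> T -> T) : Prop :=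
  (forall a b : T, exists! x : T, op a x = b) /\
  (forall a b : T, exists! y : T, op y a = b).

Definition quadratical (T : Type) (op : T -> T -> T) : Prop :=
  quasigroup op /\
  forall x y z : T, op (op x y) x = op (op z x) (op y z).

Lemma ord_pos n (i : 'I_n) : 0 < n.
Proof. by case: i => [i Hi]; apply: leq_ltn_trans Hi. Qed.

Definition ord_sub n (i : 'I_n) (k : nat) : 'I_n :=
  Ordinal (ltn_pmod (i + (n - k %% n)) (ord_pos i)).

(* k-translatable w.r.t. the ordering q : 'I_n -> T (indices 0..n-1 here,
   i.e. q_{i+1} of the paper is q i). The condition i in {2..n} becomes
   i in {1..n-1}. *)
Definition translatable (T : Type) (op : T -> T -> T) (n : nat)
    (q : 'I_n -> T) (k : nat) : Prop :=
  [/\ 1 <= k, k < n &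
   forall i j : 'I_n, 0 < i ->
     op (q i) (q j) = op (q (ord_sub i 1)) (q (ord_sub j k))].

From mathcomp Require Import all_boot ssralg zmodp.

(* Since j - (m - 1) = j + 1 mod m, (m - 1)-translatability reads
   q_i q_j = q_(i-1) q_(j+1): the product q_i q_j only depends on i + j, so the
   operation is commutative.  In a commutative quadratical quasigroup
   ww = (zx)(zx) = (zx)(xz) = xx.x whenever w = zx, i.e. for all w and x; so all
   squares equal one element c, and c = cx for every x.  Left cancellation then
   leaves a single element. *)

Set Implicit Arguments.
Unset Strict Implicit.
Unset Printing Implicit Defensive.

Import GRing.Theory.

Section PredTranslatable.
Local Open Scope ring_scope.

Variables (T : Type) (op : T -> T -> T) (n : nat) (q : 'I_n.+2 -> T).

Lemma ord_sub_Zp (i : 'I_n.+2) k : ord_sub i k = i - k%:R.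
Proof. by apply: val_inj; rewrite /= Zp_nat /= modnDmr. Qed.

Lemma ord_sub_pred (j : 'I_n.+2) : ord_sub j (n.+2 - 1) = j + 1.
Proof.
have char_n2 : n.+2%:R = 0 :> 'I_n.+2 by apply: val_inj; rewrite Zp_nat /= modnn.
by rewrite ord_sub_Zp natrB // char_n2 sub0r !opprK.
Qed.

Hypothesis trans : translatable op q (n.+2 - 1).

Lemma translatable_pred_shift i j :
  i != 0 -> op (q i) (q j) = op (q (i - 1)) (q (j + 1)).
Proof.
by case: trans => _ _ shift i_neq0; rewrite shift ?lt0n // ord_sub_Zp ord_sub_pred.
Qed.

Lemma translatable_pred_op_ord0 i j : op (q i) (q j) = op (q 0) (q (i + j)).
Proof.
rewrite -[i]natr_Zp; elim: (nat_of_ord i) j => [|k IHk] j; first by rewrite add0r.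
have [->|k1_neq0] := eqVneq (k.+1%:R : 'I_n.+2) 0; first by rewrite add0r.
rewrite (translatable_pred_shift j k1_neq0) -natr1 addrK addrAC -addrA.
exact: IHk.
Qed.

Lemma translatable_pred_comm i j : op (q i) (q j) = op (q j) (q i).
Proof.
by rewrite translatable_pred_op_ord0 [RHS]translatable_pred_op_ord0 addrC.
Qed.

End PredTranslatable.

Section CommutativeQuadratical.

Variables (T : Type) (op : T -> T -> T).
Hypotheses (quad : quadratical op) (opC : commutative op).

Lemma comm_quadratical_sqr_shift w x : op w w = op (op x x) x.
Proof.
have [[_ solve_right] quad_id] := quad.
have [z [<- _]] := solve_right x w.
by rewrite (quad_id x x z) [op x z]opC.
Qed.

Lemma comm_quadratical_sqr_const x y : op x x = op y y.
Proof. by rewrite (comm_quadratical_sqr_shift x y) [RHS](comm_quadratical_sqr_shift y y). Qed.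

Lemma comm_quadratical_sqr_absorb x y : op (op x x) y = op x x.
Proof. by rewrite (comm_quadratical_sqr_const x y) [RHS](comm_quadratical_sqr_shift y y). Qed.

Lemma comm_quadratical_trivial (x y : T) : x = y.
Proof.
have [[solve_left _] _] := quad.
have [z [_ uniq_z]] := solve_left (op x x) (op x x).
by rewrite -(uniq_z x (comm_quadratical_sqr_absorb x x)) (uniq_z y (comm_quadratical_sqr_absorb x y)).
Qed.

End CommutativeQuadratical.

Theorem theorem8p5 (m : nat) (T : finType) (op : T -> T -> T) :
  #|T| = m -> 1 < m -> quadratical op ->
  forall q : 'I_m -> T, bijective q -> ~ translatable op q (m - 1).
Proof.
move=> _ m_gt1 quad q q_bij trans.
case: m m_gt1 q q_bij trans => [|[|n]] // _ q q_bij trans.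
have [q' _ q'K] := q_bij.
have opC : commutative op.
  move=> x y; rewrite -(q'K x) -(q'K y).
  exact: (translatable_pred_comm trans (q' x) (q' y)).
have := comm_quadratical_trivial quad opC (q 0%R) (q 1%R).
by move/(bij_inj q_bij)/eqP; rewrite eq_sym oner_eq0.
Qed.
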